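(* Let $J\ge 1$, let $\Lambda=\Lambda_0\times\cdots\times\Lambda_J\subset\mathcal{G}$ and $\tilde\Lambda=\tilde\Lambda_0\times\cdots\times\tilde\Lambda_J\subset\mathcal{G}$ be finite product sets with $\Lambda\subseteq\tilde\Lambda$ and $\#(\tilde\Lambda_j\setminus\Lambda_j)=1$ for $j=1,\dots,J$, let $\mathbf{r}\in\ell_2(\mathcal{G})$ with $\operatorname{supp}\mathbf{r}\subseteq\tilde\Lambda$, and let $\alpha\in(0,1)$. Let $\bar\Lambda=\bar\Lambda_0\times\cdots\times\bar\Lambda_J$ be the product set produced by the procedure $\mathrm{Expand}(\mathbf{r},\Lambda,\tilde\Lambda,\alpha)$ described in the context. Then $\|\mathbf{R}_{\bar\Lambda}\mathbf{r}\|\ge\alpha\|\mathbf{r}\|$. Moreover, if $\widehat\Lambda=\widehat\Lambda_0\times\cdots\times\widehat\Lambda_J\subset\mathcal{G}$ is a product set such that $\sum_{j=0}^J\#(\widehat\Lambda_j\setminus\Lambda_j)$ is minimal among all product sets $\Lambda'\subset\mathcal{G}$ satisfying $\|\mathbf{R}_{\Lambda'}\mathbf{r}\|\ge\alpha\|\mathbf{r}\|$, then \[ \sum_{j=0}^J\#(\bar\Lambda_j\setminus\Lambda_j)\le\sum_{j=0}^J\#(\widehat\Lambda_j\setminus\Lambda_j)+J . \]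
   Context: Index sets: $\mathcal{F}=\{\nu\in\mathbb{N}_0^{\mathbb{N}}:\nu_i\neq0$ for only finitely many $i\}$, $\mathcal{S}$ a countable index set, $\mathcal{G}_0=\mathcal{F}\times\mathcal{S}$ (elements written $(\bar\nu,\lambda)$), $\mathcal{G}_j=\mathbb{N}_0$ for $j=1,\dots,J$, and $\mathcal{G}=\mathcal{G}_0\times\mathcal{G}_1\times\cdots\times\mathcal{G}_J$; $\|\cdot\|$ is the $\ell_2(\mathcal{G})$ norm. A product set is a set of the form $\Lambda_0\times\cdots\times\Lambda_J$ with $\Lambda_j\subseteq\mathcal{G}_j$. For $\Lambda\subseteq\mathcal{G}$, $\mathbf{R}_\Lambda$ is the operator on $\ell_2(\mathcal{G})$ multiplying pointwise by the indicator function of $\Lambda$. Contractions: for $\mathbf{v}\in\ell_2(\mathcal{G})$, with entries $\mathbf{v}_{(\bar\nu,\lambda),\nu}$ for $(\bar\nu,\lambda)\in\mathcal{G}_0$, $\nu=(\nu_1,\dots,\nu_J)\in\mathcal{G}_1\times\cdots\times\mathcal{G}_J$, define $\pi^{(0)}_{(\bar\nu,\lambda)}(\mathbf{v})=\big(\sum_{\nu}|\mathbf{v}_{(\bar\nu,\lambda),\nu}|^2\big)^{1/2}$ and, for $j=1,\dots,J$ and $\nu_j\in\mathcal{G}_j$, $\pi^{(j)}_{\nu_j}(\mathbf{v})=\big(\sum_{(\bar\nu,\lambda)\in\mathcal{G}_0}\sum_{\check\nu_j}|\mathbf{v}_{(\bar\nu,\lambda),\nu}|^2\big)^{1/2}$,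 where $\check\nu_j=(\nu_1,\dots,\nu_{j-1},\nu_{j+1},\dots,\nu_J)$ ranges over $\prod_{i\neq j,\,1\le i\le J}\mathcal{G}_i$. Procedure $\mathrm{Expand}(\mathbf{r},\Lambda,\tilde\Lambda,\alpha)$: (1) Consider the finite family of ''new-index contractions'' consisting of $\pi^{(0)}_{(\bar\nu,\lambda)}(\mathbf{r})$ for $(\bar\nu,\lambda)\in\tilde\Lambda_0\setminus\Lambda_0$ and $\pi^{(j)}_{\nu_j}(\mathbf{r})$ for $\nu_j\in\tilde\Lambda_j\setminus\Lambda_j$, $j=1,\dots,J$, each associated with its mode $j$ and index; arrange them in nonincreasing order $\pi^*_1\ge\pi^*_2\ge\cdots$. (2) Let $M$ be the smallest nonnegative integer with $\sum_{n=1}^M|\pi^*_n|^2+\|\mathbf{R}_\Lambda\mathbf{r}\|^2\ge\alpha^2\|\mathbf{r}\|^2$. (3) For $j=0,\dots,J$ let $\Lambda^{\min}_j$ be $\Lambda_j$ together with the mode-$j$ indices associated with $\pi^*_1,\dots,\pi^*_M$, and $\Lambda^{\min}=\Lambda^{\min}_0\times\cdots\times\Lambda^{\min}_J$. (4) If $\|\mathbf{R}_{\Lambda^{\min}}\mathbf{r}\|\ge\alpha\|\mathbf{r}\|$, output $\bar\Lambda=\Lambda^{\min}$. (5) Otherwise set $\bar\Lambda_j=\tilde\Lambda_j$ for $j=1,\dots,J$; arrange the values $\pi^{(0)}_{(\bar\nu,\lambda)}(\mathbf{r})$, $(\bar\nu,\lambda)\in\tilde\Lambda_0\setminus\Lambda_0$,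 in nonincreasing order $\pi^{**}_1\ge\pi^{**}_2\ge\cdots$; let $K$ be the smallest nonnegative integer with $\sum_{n=1}^K|\pi^{**}_n|^2+\sum_{(\bar\nu,\lambda)\in\Lambda_0}|\pi^{(0)}_{(\bar\nu,\lambda)}(\mathbf{r})|^2\ge\alpha^2\|\mathbf{r}\|^2$; set $\bar\Lambda_0=\Lambda_0\cup\{$indices associated with $\pi^{**}_1,\dots,\pi^{**}_K\}$, and output $\bar\Lambda=\bar\Lambda_0\times\cdots\times\bar\Lambda_J$. *)

From HB Require Import structures.
From mathcomp Require Import all_boot all_order all_algebra finmap.
From mathcomp Require Import boolp classical_sets fsbigop.
Set Implicit Arguments. Unset Strict Implicit. Unset Printing Implicit Defensive.
Import Order.TTheory GRing.Theory Num.Theory.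
Local Open Scope classical_set_scope.
Local Open Scope ring_scope.

(* F = { nu in N_0^N : nu_i <> 0 for finitely many i }, encoded canonically
   as the sequence (nu_1, ..., nu_m) with no trailing zeros (nu_i = 0 for i > m). *)
Definition Fidx := {s : seq nat | last 1%N s != 0%N}.

Section Defs.
Variables (S : countType) (J : nat).

(* G_0 = F x S ; multi-index nu = (nu_1,...,nu_J), mode j (1 <= j <= J) is the
   ordinal j-1 : 'I_J ; G = G_0 x G_1 x ... x G_J. *)
Definition G0 := (Fidx * S)%type.
Definition Gidx := (G0 * {ffun 'I_J -> nat})%type.

Definition prodset := ({fset G0} * {ffun 'I_J -> {fset nat}})%type.

Definition in_prod (L : prodset) (x : Gidx) : bool :=
  (x.1 \in L.1) && [forall j, x.2 j \in L.2 j].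

Definition subprod (L L' : prodset) : Prop :=
  (L.1 `<=` L'.1)%fset /\ forall j, (L.2 j `<=` L'.2 j)%fset.

Variable R : rcfType.

Definition restr (P : Gidx -> bool) (v : Gidx -> R) : Gidx -> R :=
  fun x => if P x then v x else 0.

Definition l2n (v : Gidx -> R) : R :=
  Num.sqrt (\sum_(x \in [set: Gidx]) v x ^+ 2).

Definition pi0 (v : Gidx -> R) (g : G0) : R :=
  Num.sqrt (\sum_(x \in [set x : Gidx | x.1 = g]) v x ^+ 2).
Definition pij (v : Gidx -> R) (j : 'I_J) (k : nat) : R :=
  Num.sqrt (\sum_(x \in [set x : Gidx | x.2 j = k]) v x ^+ 2).

(* a contraction together with its mode and index:
   inl g = mode 0, index g ; inr (j, k) = mode j+1, index k *)
Definition cand := (G0 + ('I_J * nat))%type.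

Definition cand_val (v : Gidx -> R) (c : cand) : R :=
  match c with inl g => pi0 v g | inr (j, k) => pij v j k end.

Definition new_cand (L tL : prodset) (c : cand) : bool :=
  match c with
  | inl g => (g \in tL.1) && (g \notin L.1)
  | inr (j, k) => (k \in tL.2 j) && (k \notin L.2 j)
  end.

Definition sqsum (s : seq R) : R := \sum_(a <- s) a ^+ 2.

(* bar L is a possible output of Expand(r, L, tL, alpha)
   (ties in the nonincreasing arrangements are broken arbitrarily). *)
Definition Expand_out (r : Gidx -> R) (L tL : prodset) (alpha : R)
    (barL : prodset) : Prop :=
  exists cs : seq cand,
    [/\ uniq cs, (forall c, (c \in cs) = new_cand L tL c),
        sorted (fun a b => cand_val r b <= cand_val r a) cs &
    exists M : nat,
      let P m := alpha ^+ 2 * l2n r ^+ 2 <=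
                 sqsum (map (cand_val r) (take m cs)) + l2n (restr (in_prod L) r) ^+ 2 in
      [/\ P M, (forall m, (m < M)%N -> ~ P m) &
      let inmin (x : Gidx) :=
        ((x.1 \in L.1) || (inl x.1 \in take M cs)) &&
        [forall j, (x.2 j \in L.2 j) || (inr (j, x.2 j) \in take M cs)] in
      (alpha * l2n r <= l2n (restr inmin r) /\
       (forall g, (g \in barL.1) = (g \in L.1) || (inl g \in take M cs)) /\
       (forall j k, (k \in barL.2 j) = (k \in L.2 j) || (inr (j, k) \in take M cs)))
      \/
      (~ (alpha * l2n r <= l2n (restr inmin r)) /\
       (forall j, barL.2 j = tL.2 j) /\
       exists cs0 : seq G0,
         [/\ uniq cs0, (forall g, (g \in cs0) = (g \in tL.1) && (g \notin L.1)),
             sorted (fun a b => pi0 r b <= pi0 r a) cs0 &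
         exists K : nat,
           let Q m := alpha ^+ 2 * l2n r ^+ 2 <=
                      sqsum (map (pi0 r) (take m cs0)) +
                      \sum_(g <- L.1) pi0 r g ^+ 2 in
           [/\ Q K, (forall m, (m < K)%N -> ~ Q m) &
               forall g, (g \in barL.1) = (g \in L.1) || (g \in take K cs0)]])]].

Definition cost (L L' : prodset) : nat :=
  (#|` (L'.1 `\` L.1)%fset| + \sum_(j < J) #|` (L'.2 j `\` L.2 j)%fset|)%N.

End Defs.

(* Put f x := r x ^ 2, and call the slice of a candidate index the set of
   points whose coordinate in its mode equals it, so that a squared
   contraction is the f-mass of a slice.  A point of supp r that lies in a
   product set L' but not in L lies on the slice of a coordinate that is new
   for L', and since supp r is inside tL this coordinate is a candidate.
   Hence ||R_L' r||^2 is at most ||R_L r||^2 plus the squared contractions of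
   the candidates new for L', so at most ||R_L r||^2 plus the n largest
   squared contractions, n being the number of those candidates.  Thus when
   L' meets the threshold, the greedy count M (resp. K in the fallback branch)
   is at most n, which is at most the cost of L'.  The output of the first
   branch costs at most M; in the fallback branch every mode j >= 1 costs one
   index and mode 0 at most K, and the norm bound holds because the mode-0
   slices of distinct indices are disjoint. *)

From HB Require Import structures.
From mathcomp Require Import all_boot all_order all_algebra finmap.
From mathcomp Require Import boolp classical_sets functions fsbigop.
Import Order.TTheory GRing.Theory Num.Theory.
Local Open Scope ring_scope.

Set Implicit Arguments. Unset Strict Implicit. Unset Printing Implicit Defensive.

Lemma fsbig_fset_cond (R : Type) (idx : R) (op : Monoid.com_law idx)
    (T : choiceType) (W : {fset T}) (P : set T) (f : T -> R) :
  (forall x, x \notin W -> f x = idx) ->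
  \big[op/idx]_(x \in P) f x = \big[op/idx]_(x <- W | `[< P x >]) f x.
Proof.
move=> fW; rewrite fsbig_mkcond (fsbigTE W) => [|x /fW fx]; last first.
  by rewrite /patch; case: ifP.
by rewrite [RHS]big_mkcond; apply: eq_bigr => x _; rewrite /patch.
Qed.

Lemma minimal_index_le (P : nat -> Prop) (M n : nat) :
  (forall m, (m < M)%N -> ~ P m) -> P n -> (M <= n)%N.
Proof. by move=> minM Pn; rewrite leqNgt; apply/negP => /minM. Qed.

Lemma count_le_size (T : eqType) (a : pred T) (s t : seq T) :
  uniq s -> (forall x, x \in s -> a x -> x \in t) -> (count a s <= size t)%N.
Proof.
move=> u_s sub; rewrite -size_filter uniq_leq_size ?filter_uniq // => x.
by rewrite mem_filter => /andP[ax xs]; apply: sub.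
Qed.

Lemma card_fsetD_le_size (T : choiceType) (A B : {fset T}) (s : seq T) :
  (forall x, x \in A -> x \notin B -> x \in s) -> (#|` (A `\` B)%fset| <= size s)%N.
Proof.
move=> sub; apply: uniq_leq_size (fset_uniq _) _ => x.
by rewrite inE => /andP[xB xA]; apply: sub.
Qed.

Section WeightedSums.
Variables (R : numDomainType) (T : Type) (W : seq T) (f : T -> R).
Hypothesis f_ge0 : forall x, 0 <= f x.

Lemma sum_le_supp (P Q : pred T) :
  (forall x, f x != 0 -> P x -> Q x) ->
  \sum_(x <- W | P x) f x <= \sum_(x <- W | Q x) f x.
Proof.
move=> PQ; rewrite big_mkcond [leRHS]big_mkcond ler_sum // => x _.
have [->|fx] := eqVneq (f x) 0; first by case: ifP; case: ifP.
by case: ifP => [/(PQ x fx) -> //|_]; case: ifP.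
Qed.

Lemma sum_predU_le (P Q : pred T) :
  \sum_(x <- W | P x || Q x) f x <= \sum_(x <- W | P x) f x + \sum_(x <- W | Q x) f x.
Proof.
rewrite (big_mkcond P) (big_mkcond Q) -big_split big_mkcond.
apply: ler_sum => x _ /=.
by case: (P x); case: (Q x); rewrite ?addr0 ?add0r ?lerDl.
Qed.

Lemma sum_le_cover (C : Type) (s : seq C) (m : C -> pred T) (P Q : pred T) :
  (forall x, f x != 0 -> P x -> Q x || has (m^~ x) s) ->
  \sum_(x <- W | P x) f x <=
    \sum_(x <- W | Q x) f x + \sum_(c <- s) \sum_(x <- W | m c x) f x.
Proof.
elim: s Q => [|c s IH] Q cover.
  rewrite big_nil addr0; apply: sum_le_supp => x fx Px.
  by move: (cover x fx Px); rewrite orbF.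
rewrite big_cons addrA.
apply: le_trans (IH (fun x => Q x || m c x) _) _.
  by move=> x fx Px; rewrite -orbA; exact: cover.
by rewrite lerD2r sum_predU_le.
Qed.

End WeightedSums.

Lemma sum_le_take_sorted (R : numDomainType) (T : Type) (w : T -> R) (s : seq T)
    (D : pred T) (n : nat) :
  (forall x, 0 <= w x) -> sorted (fun a b => w b <= w a) s -> (count D s <= n)%N ->
  \sum_(x <- s | D x) w x <= \sum_(x <- take n s) w x.
Proof.
move=> w0; elim: s n => [|a s IH] n sorted_as; first by rewrite !big_nil.
have sorted_s := path_sorted sorted_as.
have le_a : all (fun y => w y <= w a) s.
  by apply: order_path_min sorted_as => x y z /= yx zy; apply: le_trans zy yx.
case: n => [|n] /= countD.
  by rewrite big_hasC ?big_nil // has_count -leqNgt.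
rewrite !big_cons; case: (D a) countD => /= countD; first by rewrite lerD2l IH.
apply: le_trans (IH n.+1 sorted_s countD) _.
rewrite -addn1 takeD big_cat /= addrC lerD2r.
have : all (fun y => w y <= w a) (drop n s).
  by move: le_a; rewrite -{1}(cat_take_drop n s) all_cat => /andP[].
case: (drop n s) => [|y t] /=; first by rewrite big_nil.
by rewrite take0 big_seq1 => /andP[].
Qed.

Lemma sum_fibres (R : nmodType) (T : Type) (K : eqType) (W : seq T) (s : seq K)
    (k : T -> K) (f : T -> R) :
  uniq s ->
  \sum_(g <- s) \sum_(x <- W | k x == g) f x = \sum_(x <- W | k x \in s) f x.
Proof.
move=> us; under eq_bigr do rewrite big_mkcond.
rewrite exchange_big [RHS]big_mkcond; apply: eq_bigr => x _ /=.
rewrite -big_mkcond big_const_seq (eq_count (a2 := pred1 (k x))) => [|g]; last first.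
  by rewrite /= eq_sym.
by rewrite count_uniq_mem //; case: (k x \in s); rewrite /= ?addr0.
Qed.

Lemma sum_le_greedy_prefix (R : numDomainType) (T C : Type) (W : seq T) (f : T -> R)
    (slice : C -> pred T) (v : C -> R) (cs : seq C) (P Q : pred T) (D : pred C) :
  (forall x, 0 <= f x) -> (forall c, 0 <= v c) ->
  (forall c, v c ^+ 2 = \sum_(x <- W | slice c x) f x) ->
  sorted (fun a b => v b <= v a) cs ->
  (forall x, f x != 0 -> P x -> Q x || has (fun c => D c && slice c x) cs) ->
  \sum_(x <- W | P x) f x <=
    \sum_(x <- W | Q x) f x + \sum_(c <- take (count D cs) cs) v c ^+ 2.
Proof.
move=> f0 v0 v_sq sorted_cs cover.
apply: le_trans (sum_le_cover (s := filter D cs) (m := slice) (Q := Q) W f0 _) _.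
  move=> x fx Px; rewrite has_count count_filter -has_count.
  rewrite (eq_has (a2 := fun c => D c && slice c x)) ?cover // => c /=.
  by rewrite andbC.
rewrite lerD2l big_filter -(eq_bigr _ (fun c _ => v_sq c)).
apply: sum_le_take_sorted => [c||//]; first by rewrite exprn_ge0.
by apply: (sub_sorted _ sorted_cs) => a b /=; rewrite ler_sqr ?nnegrE.
Qed.

Section Candidates.
Variables (S : countType) (J : nat).

Lemma prodset_finite (L : prodset S J) :
  exists W : {fset Gidx S J}, forall x, in_prod L x -> x \in W.
Proof.
pose b := \max_(j < J) \max_(k <- L.2 j) k.
pose box := [seq (g, [ffun j => val (h j)] : {ffun 'I_J -> nat}) |
              g <- enum_fset L.1,
              h : {ffun 'I_J -> 'I_b.+1} <- enum {ffun 'I_J -> 'I_b.+1}].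
exists [fset x | x in box]%fset => -[g f] /andP[/= gL /forallP fL].
have f_lt j : (f j < b.+1)%N.
  rewrite ltnS; apply: leq_trans (leq_bigmax_cond j isT).
  exact: (leq_bigmax_seq (F := id) _ (fL j) isT).
pose h : {ffun 'I_J -> 'I_b.+1} := [ffun j => Ordinal (f_lt j)].
have -> : f = [ffun j => val (h j)] by apply/ffunP => j; rewrite !ffunE.
by rewrite inE; apply: allpairs_f; rewrite ?mem_enum.
Qed.

Definition slice (c : cand S J) (x : Gidx S J) : bool :=
  match c with inl g => x.1 == g | inr (j, k) => x.2 j == k end.

Lemma new_slice_of_notin (L L' : prodset S J) x :
  in_prod L' x -> ~~ in_prod L x -> exists c, new_cand L L' c && slice c x.
Proof.
case/andP=> xL'1 /forallP xL'2; rewrite /in_prod negb_and => /orP[xL1|].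
  by exists (inl x.1); rewrite /= xL'1 xL1 eqxx.
rewrite negb_forall => /existsP[j xL2].
by exists (inr (j, x.2 j)); rewrite /= xL'2 xL2 eqxx.
Qed.

Lemma new_cand_slice (L L' L'' : prodset S J) c x :
  slice c x -> in_prod L'' x -> new_cand L L' c -> new_cand L L'' c.
Proof.
case: c => [g|[j k]] /= /eqP <- /andP[x1 /forallP x2] /andP[_ ->];
  by rewrite ?x1 ?x2.
Qed.

Definition new_cands (L L' : prodset S J) : seq (cand S J) :=
  [seq inl g | g <- enum_fset (L'.1 `\` L.1)%fset] ++
  [seq inr (j, k) | j <- index_enum 'I_J, k <- enum_fset (L'.2 j `\` L.2 j)%fset].

Lemma size_new_cands (L L' : prodset S J) : size (new_cands L L') = cost L L'.
Proof. by rewrite size_cat size_map size_allpairs_dep sumnE big_map. Qed.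

Lemma mem_new_cands (L L' : prodset S J) c :
  (c \in new_cands L L') = new_cand L L' c.
Proof.
rewrite mem_cat; case: c => [g|[j k]] /=.
  rewrite mem_map => [|? ? [] //].
  by case: allpairsPdep => [[? [? [_ _ //]]]|_]; rewrite orbF inE andbC.
case: mapP => [[? _ //]|_] /=.
apply/allpairsPdep/idP => [[j' [k' [_ + [-> ->]]]]|jk]; first by rewrite inE andbC.
by exists j, k; rewrite mem_index_enum inE andbC.
Qed.

Lemma uniq_new_cands (L L' : prodset S J) : uniq (new_cands L L').
Proof.
rewrite cat_uniq map_inj_uniq ?fset_uniq => [/=|? ? [] //].
apply/andP; split.
  by apply/hasPn => _ /allpairsPdep[? [? [_ _ ->]]]; apply/mapP => -[].
apply: allpairs_uniq_dep => [|j _|[? ?] [? ?] _ _ [-> ->]] //.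
  exact: index_enum_uniq.
exact: fset_uniq.
Qed.

Lemma cost_le_size (L L' : prodset S J) (s : seq (cand S J)) :
  (forall c, new_cand L L' c -> c \in s) -> (cost L L' <= size s)%N.
Proof.
move=> sub; rewrite -size_new_cands uniq_leq_size ?uniq_new_cands // => c.
by rewrite mem_new_cands => /sub.
Qed.

Lemma count_new_cand_le_cost (L L' : prodset S J) (s : seq (cand S J)) :
  uniq s -> (count (new_cand L L') s <= cost L L')%N.
Proof.
move=> u_s; rewrite -size_new_cands count_le_size // => c _.
by rewrite mem_new_cands.
Qed.

Lemma count_new_index0_le_cost (L L' : prodset S J) (s : seq (G0 S)) :
  uniq s -> (forall g, g \in s -> g \notin L.1) ->
  (count (mem L'.1) s <= cost L L')%N.
Proof.
move=> u_s s_new; apply: leq_trans (leq_addr _ _).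
by apply: count_le_size u_s _ => g /s_new gL gL'; rewrite inE gL.
Qed.

Definition in_prod_ext (L : prodset S J) (s : seq (cand S J)) (x : Gidx S J) : bool :=
  ((x.1 \in L.1) || (inl x.1 \in s)) &&
  [forall j, (x.2 j \in L.2 j) || (inr (j, x.2 j) \in s)].

Section Extension.
Variables (L L' : prodset S J) (s : seq (cand S J)).
Hypothesis L'1E : forall g, (g \in L'.1) = (g \in L.1) || (inl g \in s).
Hypothesis L'2E : forall j k, (k \in L'.2 j) = (k \in L.2 j) || (inr (j, k) \in s).

Lemma in_prod_extE : in_prod L' = in_prod_ext L s.
Proof.
apply/funext => x; rewrite /in_prod L'1E; congr (_ && _).
by apply: eq_forallb => j; rewrite L'2E.
Qed.

Lemma cost_ext_le : (cost L L' <= size s)%N.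
Proof.
apply: cost_le_size => -[g|[j k]] /= /andP[]; first by rewrite L'1E => /orP[->|].
by rewrite L'2E => /orP[->|].
Qed.

End Extension.

Lemma cost_full_modes (L L' tL : prodset S J) :
  (forall j, L'.2 j = tL.2 j) -> (forall j, #|` (tL.2 j `\` L.2 j)%fset| = 1%N) ->
  cost L L' = (#|` (L'.1 `\` L.1)%fset| + J)%N.
Proof.
move=> L'2E tL_one; rewrite /cost; congr (_ + _)%N.
under eq_bigr => j _ do rewrite L'2E tL_one.
by rewrite sum1_card card_ord.
Qed.

End Candidates.

Section SquaredNorms.
Variables (S : countType) (J : nat) (R : rcfType).
Variables (W : {fset Gidx S J}) (r : Gidx S J -> R).
Hypothesis r_supp : forall x, x \notin W -> r x = 0.

Let fsum_sq (P : set (Gidx S J)) :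
  \sum_(x \in P) r x ^+ 2 = \sum_(x <- W | `[< P x >]) r x ^+ 2.
Proof. by apply: fsbig_fset_cond => x /r_supp ->; rewrite expr0n. Qed.

Let fsum_sq_ge0 (P : set (Gidx S J)) : 0 <= \sum_(x \in P) r x ^+ 2.
Proof. by apply: fsumr_ge0 => x _; apply: sqr_ge0. Qed.

Lemma l2n_restr_sq (P : pred (Gidx S J)) :
  l2n (restr P r) ^+ 2 = \sum_(x <- W | P x) r x ^+ 2.
Proof.
rewrite /l2n sqr_sqrtr; last by apply: fsumr_ge0 => x _; apply: sqr_ge0.
rewrite (@fsbig_fset_cond _ _ _ _ W) => [|x /r_supp]; last first.
  by rewrite /restr => ->; rewrite if_same expr0n.
rewrite big_mkcond [RHS]big_mkcond; apply: eq_bigr => x _.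
by rewrite /restr asboolT //; case: ifP; rewrite ?expr0n.
Qed.

Lemma cand_val_sq (c : cand S J) :
  cand_val r c ^+ 2 = \sum_(x <- W | slice c x) r x ^+ 2.
Proof.
case: c => [g|[j k]]; rewrite /= /pi0 /pij sqr_sqrtr ?fsum_sq_ge0 // fsum_sq;
  by apply: eq_bigl => x; apply/asboolP/eqP.
Qed.

Lemma l2n_restr_geE (alpha : R) (P : pred (Gidx S J)) : 0 <= alpha ->
  (alpha * l2n r <= l2n (restr P r)) =
  (alpha ^+ 2 * l2n r ^+ 2 <= \sum_(x <- W | P x) r x ^+ 2).
Proof.
move=> alpha0; rewrite -l2n_restr_sq -exprMn ler_sqr // nnegrE ?sqrtr_ge0 //.
by rewrite mulr_ge0 ?sqrtr_ge0.
Qed.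

End SquaredNorms.

Section Expand.
Variables (S : countType) (J : nat) (R : rcfType).
Variables (L tL : prodset S J) (r : Gidx S J -> R) (alpha : R).
Variable W : {fset Gidx S J}.
Hypothesis r_suppW : forall x, x \notin W -> r x = 0.
Hypothesis r_supp : forall x, r x != 0 -> in_prod tL x.
Hypothesis alpha_ge0 : 0 <= alpha.

Let r_sq_ge0 x : 0 <= r x ^+ 2. Proof. exact: sqr_ge0. Qed.

Let r_sq_supp x : r x ^+ 2 != 0 -> in_prod tL x.
Proof. by rewrite sqrf_eq0; apply: r_supp. Qed.

Lemma Expand_min_threshold_le_count (cs : seq (cand S J)) (M : nat)
    (hatL : prodset S J) :
  (forall c, (c \in cs) = new_cand L tL c) ->
  sorted (fun a b => cand_val r b <= cand_val r a) cs ->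
  (forall m, (m < M)%N -> ~ alpha ^+ 2 * l2n r ^+ 2 <=
     sqsum (map (cand_val r) (take m cs)) + l2n (restr (in_prod L) r) ^+ 2) ->
  alpha * l2n r <= l2n (restr (in_prod hatL) r) ->
  (M <= count (new_cand L hatL) cs)%N.
Proof.
move=> mem_cs sorted_cs minM; rewrite (l2n_restr_geE r_suppW _ alpha_ge0) => hatL_ge.
apply: (minimal_index_le minM); apply: le_trans hatL_ge _.
rewrite (l2n_restr_sq r_suppW) /sqsum big_map addrC.
apply: sum_le_greedy_prefix (cand_val_sq r_suppW) sorted_cs _
  => // [c|x /r_sq_supp xtL xhatL].
  by case: c => [g|[j k]]; rewrite /= ?/pi0 ?/pij sqrtr_ge0.
apply/orP; case xL: (in_prod L x); [by left | right].
have [c /andP[c_new c_x]] := new_slice_of_notin xhatL (negbT xL).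
by apply/hasP; exists c; rewrite ?c_new ?c_x // mem_cs (new_cand_slice c_x xtL c_new).
Qed.

Lemma Expand_fallback_norm_ge (cs0 : seq (G0 S)) (K : nat) (barL : prodset S J) :
  uniq cs0 -> (forall g, (g \in cs0) = (g \in tL.1) && (g \notin L.1)) ->
  alpha ^+ 2 * l2n r ^+ 2 <=
    sqsum (map (pi0 r) (take K cs0)) + \sum_(g <- L.1) pi0 r g ^+ 2 ->
  (forall j, barL.2 j = tL.2 j) ->
  (forall g, (g \in barL.1) = (g \in L.1) || (g \in take K cs0)) ->
  alpha * l2n r <= l2n (restr (in_prod barL) r).
Proof.
move=> u_cs0 mem_cs0 QK barL2E barL1E.
rewrite (l2n_restr_geE r_suppW _ alpha_ge0); apply: le_trans QK _.
have u_cat : uniq (take K cs0 ++ L.1).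
  rewrite cat_uniq take_uniq ?fset_uniq //= andbT; apply/hasPn => g gL.
  by apply/negP => /mem_take; rewrite mem_cs0 gL andbF.
rewrite /sqsum big_map -big_cat /=.
under eq_bigr => g _ do rewrite (cand_val_sq r_suppW (inl g)) /=.
rewrite sum_fibres //; apply: sum_le_supp => // x /r_sq_supp.
case/andP=> _ /forallP xtL2; rewrite mem_cat /in_prod barL1E => x1.
by rewrite orbC x1; apply/forallP => j; rewrite barL2E.
Qed.

Lemma Expand_fallback_threshold_le_count (cs0 : seq (G0 S)) (K : nat)
    (hatL : prodset S J) :
  (forall g, (g \in cs0) = (g \in tL.1) && (g \notin L.1)) ->
  sorted (fun a b => pi0 r b <= pi0 r a) cs0 ->
  (forall m, (m < K)%N -> ~ alpha ^+ 2 * l2n r ^+ 2 <=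
     sqsum (map (pi0 r) (take m cs0)) + \sum_(g <- L.1) pi0 r g ^+ 2) ->
  alpha * l2n r <= l2n (restr (in_prod hatL) r) ->
  (K <= count (mem hatL.1) cs0)%N.
Proof.
move=> mem_cs0 sorted_cs0 minK; rewrite (l2n_restr_geE r_suppW _ alpha_ge0) => hatL_ge.
apply: (minimal_index_le minK); apply: le_trans hatL_ge _.
rewrite [X in _ <= _ + X](eq_bigr _ (fun g _ => cand_val_sq r_suppW (inl g))) /=.
rewrite sum_fibres ?fset_uniq // /sqsum big_map addrC.
apply: (sum_le_greedy_prefix _ _ (fun g => cand_val_sq r_suppW (inl g)) sorted_cs0)
  => // [g|x /r_sq_supp /andP[xtL1 _] /andP[xhatL1 _]]; first exact: sqrtr_ge0.
apply/orP; case xL: (x.1 \in L.1); [by left | right].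
by apply/hasP; exists x.1; rewrite ?mem_cs0 ?xtL1 ?xL /= ?xhatL1 ?eqxx.
Qed.

End Expand.

Unset Implicit Arguments.

Theorem theorem4p4 (R : rcfType) (S : countType) (J : nat) (hJ : (1 <= J)%N)
    (L tL : prodset S J) (r : Gidx S J -> R) (alpha : R)
    (hsub : subprod L tL)
    (hone : forall j : 'I_J, #|` (tL.2 j `\` L.2 j)%fset| = 1%N)
    (hsupp : forall x, r x != 0 -> in_prod tL x)
    (halpha : 0 < alpha < 1)
    (barL : prodset S J) (hE : Expand_out r L tL alpha barL) :
  alpha * l2n r <= l2n (restr (in_prod barL) r) /\
  forall hatL : prodset S J,
    alpha * l2n r <= l2n (restr (in_prod hatL) r) ->
    (forall L' : prodset S J, alpha * l2n r <= l2n (restr (in_prod L') r) ->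
       (cost L hatL <= cost L L')%N) ->
    (cost L barL <= cost L hatL + J)%N.
Proof.
have [W tL_W] := prodset_finite tL.
have r_suppW x : x \notin W -> r x = 0.
  by move=> xW; apply/eqP; apply: contraNT xW => /hsupp /tL_W.
have alpha_ge0 : 0 <= alpha by case/andP: halpha => /ltW.
have size_take_le (T : Type) n (s : seq T) : (size (take n s) <= n)%N.
  by rewrite size_take_min geq_minl.
case: hE => cs [u_cs mem_cs sorted_cs [M [_ minM /=]]].
case=> [[hmin [barL1E barL2E]] |
        [_ [barL2E [cs0 [u_cs0 mem_cs0 sorted_cs0 [K [QK minK barL1E]]]]]]].
- split=> [|hatL hatL_ge _]; first by rewrite (in_prod_extE barL1E barL2E).
  have M_le := Expand_min_threshold_le_count r_suppW hsupp alpha_ge0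
                 mem_cs sorted_cs minM hatL_ge.
  apply: leq_trans (leq_addr _ _); apply: leq_trans (cost_ext_le barL1E barL2E) _.
  apply: leq_trans (size_take_le _ _ _) (leq_trans M_le _).
  exact: count_new_cand_le_cost.
- split=> [|hatL hatL_ge _].
    exact: (Expand_fallback_norm_ge r_suppW hsupp alpha_ge0
              u_cs0 mem_cs0 QK barL2E barL1E).
  have K_le := Expand_fallback_threshold_le_count r_suppW hsupp alpha_ge0
                 mem_cs0 sorted_cs0 minK hatL_ge.
  rewrite (cost_full_modes barL2E hone) leq_add2r.
  apply: leq_trans (card_fsetD_le_size (s := take K cs0) _) _ => [g|].
    by rewrite barL1E => /orP[->|].
  apply: leq_trans (size_take_le _ _ _) (leq_trans K_le _).
  by apply: count_new_index0_le_cost => // g; rewrite mem_cs0 => /andP[].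
Qed.
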